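(* Let $k\ge2$ be an integer and $n\ge1$ a natural number. Then $(L_k^{(1)})^n=L_k^{(n)}\,(L_k^{(0)})^{n-1}$.
   Context: Fix an integer $k\ge2$. Let $Q_k$ be the $k\times k$ matrix whose first row is all ones, with $(Q_k)_{i+1,i}=1$ for $1\le i\le k-1$ and all other entries $0$, and for $r\in\mathbb Z$ let $Q_k^r$ denote its $r$-th power. The generalized Lucas sequence of order $k$, $(l_{k,n})_{n\in\mathbb Z}$, is the two-sided sequence satisfying $l_{k,n+k}=l_{k,n+k-1}+\dots+l_{k,n}$ for all $n\in\mathbb Z$ with initial values $l_{k,r}=\operatorname{trace}(Q_k^r)$ for $0\le r\le k-1$ (so $l_{k,0}=k$ and $l_{k,r}=2^r-1$ for $1\le r\le k-1$). For $n\in\mathbb Z$ the generalized Lucas matrix $L_k^{(n)}$ is the $k\times k$ matrix with entries $(L_k^{(n)})_{i,1}=l_{k,k+n-i}$ and $(L_k^{(n)})_{i,j}=\sum_{m=n-i+j-1}^{k+n-i-1} l_{k,m}$ for $2\le j\le k$, $1\le i\le k$. *)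

From mathcomp Require Import all_boot all_order all_algebra.
Set Implicit Arguments. Unset Strict Implicit. Unset Printing Implicit Defensive.
Import Order.TTheory GRing.Theory Num.Theory.
Local Open Scope ring_scope.

Definition Qmat (k : nat) : 'M[int]_k :=
  \matrix_(i < k, j < k) (if (i : nat) == 0%N then 1 else if (i : nat) == j.+1 then 1 else 0).

Definition luc_init (k : nat) : seq int := [seq \tr (Qmat k ^+ r) | r <- iota 0 k].

(* windows w = [l_m; ...; l_{m+k-1}] of k consecutive terms *)
Definition luc_fwd (w : seq int) : seq int := rcons (behead w) (\sum_(x <- w) x).
(* backward step: [l_m..l_{m+k-1}] -> [l_{m-1}..l_{m+k-2}],
   with l_{m-1} = l_{m+k-1} - (l_m + ... + l_{m+k-2}) *)
Definition luc_bwd (w : seq int) : seq int :=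
  let w' := take (size w).-1 w in (last 0 w - \sum_(x <- w') x) :: w'.

Definition luc (k : nat) (n : int) : int :=
  match n with
  | Posz m => head 0 (iter m luc_fwd (luc_init k))
  | Negz m => head 0 (iter m.+1 luc_bwd (luc_init k))
  end.

(* generalized Lucas matrix L_k^{(n)}; with 0-based i, j (paper: i+1, j+1):
   column 1: l_{k,k+n-(i+1)};
   column j+1 >= 2: sum_{m = n-(i+1)+(j+1)-1}^{k+n-(i+1)-1} l_{k,m}  (k - j terms) *)
Definition lucmx (k : nat) (n : int) : 'M[int]_k :=
  \matrix_(i < k, j < k)
    (if (j : nat) == 0%N then luc k (k%:Z + n - (i.+1)%:Z)
     else \sum_(t < k - j) luc k (n - i%:Z + j%:Z - 1 + t%:Z)).

From mathcomp Require Import all_boot all_order all_algebra.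
From mathcomp Require Import zify ring.
Set Implicit Arguments. Unset Strict Implicit. Unset Printing Implicit Defensive.
Import Order.TTheory GRing.Theory Num.Theory.
Local Open Scope ring_scope.

(* Q_k acts on the Lucas matrices as a shift: (Q A) has the column sums of A
   as row 0 and row i of A as row i+1, while (A Q) has A i 0 + A i (j+1) in
   column j.  For A = L^(m) both operations produce L^(m+1), by the Lucas
   recurrence.  Hence L^(n) = Q^n L^(0), and Q commutes with L^(0), so
   (L^(1))^n = (Q L^(0))^n = Q^n (L^(0))^n = L^(n) (L^(0))^(n-1). *)

Lemma size_luc_fwd (w : seq int) : (0 < size w)%N -> size (luc_fwd w) = size w.
Proof. by case: w => //= x w _; rewrite size_rcons. Qed.

Lemma size_luc_bwd (w : seq int) : (0 < size w)%N -> size (luc_bwd w) = size w.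
Proof. by rewrite /luc_bwd /= size_take; case: (size w) => //= n _; rewrite ltnSn. Qed.

Lemma luc_bwdK (w : seq int) : (0 < size w)%N -> luc_fwd (luc_bwd w) = w.
Proof.
case/lastP: w => [//|s x] _.
rewrite /luc_fwd /luc_bwd /= size_rcons /=.
have -> : take (size s) (rcons s x) = s by rewrite -cats1 take_size_cat.
by rewrite big_cons subrK last_rcons.
Qed.

Lemma nth_luc_fwd (w : seq int) i :
  (i.+1 < size w)%N -> nth 0 (luc_fwd w) i = nth 0 w i.+1.
Proof.
move=> ltiw; rewrite /luc_fwd nth_rcons size_behead nth_behead ifT //.
by rewrite -ltnS prednK // (leq_ltn_trans _ ltiw).
Qed.

Lemma nth_luc_fwd_last (w : seq int) :
  nth 0 (luc_fwd w) (size w).-1 = \sum_(x <- w) x.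
Proof. by rewrite /luc_fwd nth_rcons size_behead ltnn eqxx. Qed.

Section LucasSequence.
Variable k : nat.
Hypothesis k_gt0 : (0 < k)%N.

Definition luc_window (a : int) : seq int :=
  match a with
  | Posz m => iter m luc_fwd (luc_init k)
  | Negz m => iter m.+1 luc_bwd (luc_init k)
  end.

Lemma size_luc_window a : size (luc_window a) = k.
Proof.
have size_init : size (luc_init k) = k by rewrite size_map size_iota.
case: a => m; rewrite /luc_window; [move: m | move: m.+1] => {}m.
  by elim: m => // m IHm; rewrite iterS size_luc_fwd IHm.
by elim: m => // m IHm; rewrite iterS size_luc_bwd IHm.
Qed.

Lemma luc_windowS a : luc_window (a + 1) = luc_fwd (luc_window a).
Proof.
case: a => [m | [|m]]; first by rewrite -PoszD addn1.
  by rewrite /= luc_bwdK // size_map size_iota.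
have -> : Negz m.+1 + 1 = Negz m by rewrite !NegzE; lia.
by rewrite [in RHS]/= luc_bwdK // -/(luc_window (Negz m)) size_luc_window.
Qed.

Lemma nth_luc_window a i : (i < k)%N -> nth 0 (luc_window a) i = luc k (a + i%:Z).
Proof.
elim: i a => [|i IHi] a lt_ik; first by rewrite addr0; case: a.
rewrite -nth_luc_fwd ?size_luc_window // -luc_windowS IHi; last lia.
by congr (luc k _); lia.
Qed.

Lemma luc_recurrence a : luc k (a + k%:Z) = \sum_(u < k) luc k (a + u%:Z).
Proof.
have -> : a + k%:Z = (a + 1) + k.-1%:Z by lia.
rewrite -nth_luc_window ?luc_windowS; last lia.
rewrite -(size_luc_window a) nth_luc_fwd_last (big_nth 0) big_mkord size_luc_window.
by apply: eq_bigr => u _; rewrite nth_luc_window.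
Qed.

Lemma sum_luc_prev b : \sum_(i < k) luc k (b - i%:Z) = luc k (b + 1).
Proof.
rewrite (reindex_inj rev_ord_inj) /=.
have -> : b + 1 = (b + 1 - k%:Z) + k%:Z by ring.
by rewrite luc_recurrence; apply: eq_bigr => i _; congr (luc k _); have := ltn_ord i; lia.
Qed.

End LucasSequence.

Section CompanionMatrix.
Variable k : nat.

Lemma Qmat_mul_mx (F : nat -> nat -> int) (i j : 'I_k) :
  (Qmat k *m \matrix_(r < k, c < k) F r c) i j =
    if i == 0 :> nat then \sum_(r < k) F r j else F i.-1 j.
Proof.
rewrite mxE; under eq_bigr do rewrite !mxE.
case: i => [[|i] lt_ik] /=; first by apply: eq_bigr => r _; rewrite mul1r.
rewrite (eq_bigr (fun r : 'I_k => if r == i :> nat then F r j else 0)); last first.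
  by move=> r _; rewrite eqSS eq_sym; case: eqP; rewrite ?mul1r ?mul0r.
by rewrite -big_mkcond (big_ord1_eq _ (fun r => F r j)) ltnW.
Qed.

(* The hypothesis lets the last column j = k - 1, whose j.+1 lies outside the
   matrix, obey the same formula. *)
Lemma mx_mul_Qmat (F : nat -> nat -> int) (i j : 'I_k) :
  (forall r, F r k = 0) ->
  (\matrix_(r < k, c < k) F r c *m Qmat k) i j = F i 0%N + F i j.+1.
Proof.
case: k i j => [[] //|k'] i j F_k0.
rewrite mxE big_ord_recl !mxE /= mulr1; congr (_ + _).
rewrite (eq_bigr (fun r : 'I_k' => if r == j :> nat then F i r.+1 else 0)); last first.
  by move=> r _; rewrite !mxE /= eqSS; case: eqP; rewrite ?mulr1 ?mulr0.
rewrite -big_mkcond (big_ord1_eq _ (fun r => F i r.+1)); case: ltnP => // le_k'j.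
have /eqP -> : j == k' :> nat by rewrite eqn_leq le_k'j andbT -ltnS.
by rewrite F_k0.
Qed.

End CompanionMatrix.

Definition lucmx_entry (k : nat) (m : int) (i j : nat) : int :=
  if j == 0%N then luc k (k%:Z + m - (i.+1)%:Z)
  else \sum_(t < k - j) luc k (m - i%:Z + j%:Z - 1 + t%:Z).

Lemma lucmxE k m : lucmx k m = \matrix_(i < k, j < k) lucmx_entry k m i j.
Proof. by []. Qed.

Section LucasMatrix.
Variable k : nat.
Hypothesis k_gt0 : (0 < k)%N.

Lemma lucmx_entry_sum m i j :
  lucmx_entry k m i j = \sum_(t < k - j) luc k (m - i%:Z + j%:Z - 1 + t%:Z).
Proof.
rewrite /lucmx_entry; case: eqP => // ->.
rewrite subn0 -luc_recurrence //; congr (luc k _); lia.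
Qed.

Lemma lucmx_entry_col_k m i : lucmx_entry k m i k = 0.
Proof. by rewrite /lucmx_entry eqn0Ngt k_gt0 subnn big_ord0. Qed.

Lemma sum_lucmx_entry m j :
  \sum_(r < k) lucmx_entry k m r j = lucmx_entry k (m + 1) 0 j.
Proof.
under eq_bigr do rewrite lucmx_entry_sum.
rewrite exchange_big lucmx_entry_sum; apply: eq_bigr => t _.
have -> : m + 1 - 0%N%:Z + j%:Z - 1 + t%:Z = (m + j%:Z - 1 + t%:Z) + 1 by ring.
by rewrite -sum_luc_prev //; apply: eq_bigr => r _; congr (luc k _); ring.
Qed.

Lemma lucmx_entry_shift m i j : lucmx_entry k m i j = lucmx_entry k (m + 1) i.+1 j.
Proof.
rewrite /lucmx_entry; case: eqP => _; [|apply: eq_bigr => t _].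
all: by congr (luc k _); lia.
Qed.

Lemma lucmx_entry_add m i j : (j < k)%N ->
  lucmx_entry k m i 0 + lucmx_entry k m i j.+1 = lucmx_entry k (m + 1) i j.
Proof.
move=> lt_jk; rewrite {1}/lucmx_entry /= !lucmx_entry_sum -(subnSK lt_jk).
rewrite big_ord_recr /= [RHS]addrC; congr (_ + _); first by congr (luc k _); lia.
by apply: eq_bigr => t _; congr (luc k _); lia.
Qed.

Lemma Qmat_mul_lucmx m : Qmat k *m lucmx k m = lucmx k (m + 1).
Proof.
apply/matrixP => i j; rewrite !lucmxE Qmat_mul_mx [RHS]mxE.
by case: i => [[|i] lt_ik] /=; [exact: sum_lucmx_entry | exact: lucmx_entry_shift].
Qed.

Lemma lucmx_mul_Qmat m : lucmx k m *m Qmat k = lucmx k (m + 1).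
Proof.
apply/matrixP => i j; rewrite !lucmxE mx_mul_Qmat ?mxE.
  exact: lucmx_entry_add.
exact: lucmx_entry_col_k.
Qed.

Lemma lucmx_Qmat_exp n : lucmx k n%:Z = Qmat k ^+ n *m lucmx k 0.
Proof.
elim: n => [|n IHn]; first by rewrite expr0 mul1mx.
by rewrite -addn1 PoszD -Qmat_mul_lucmx IHn mulmxA mulmxE -exprS addn1.
Qed.

End LucasMatrix.

Theorem theorem3 (k n : nat) (hk : (2 <= k)%N) (hn : (1 <= n)%N) :
  (lucmx k 1) ^+ n = lucmx k n%:Z *m (lucmx k 0) ^+ n.-1.
Proof.
have k_gt0 : (0 < k)%N by exact: ltnW.
have L1E : lucmx k 1 = Qmat k * lucmx k 0 by rewrite -[1]add0r -Qmat_mul_lucmx.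
have QL0 : GRing.comm (Qmat k) (lucmx k 0).
  by rewrite /GRing.comm -!mulmxE Qmat_mul_lucmx // lucmx_mul_Qmat.
case: n hn => // n _.
by rewrite L1E exprMn_comm // lucmx_Qmat_exp // -mulmxA !mulmxE -exprS.
Qed.
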